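(* Let $V$ be a valuation domain with quotient field $K$, and let $W_1,W_2$ be torsion extensions of $V$ to $K(X)$, with valuations $w_1,w_2$ and maximal ideals $M_1,M_2$. Then: (1) The following are equivalent: (a) $w_1\le w_2$; (b) $W_1\cap K[X]\subseteq W_2\cap K[X]$; (c) $M_1\cap K[X]\subseteq M_2\cap K[X]$. (2) $W_1=W_2$ if and only if $W_1\cap K[X]=W_2\cap K[X]$, if and only if $M_1\cap K[X]=M_2\cap K[X]$. (3) The set $\mathcal{W}_{\mathrm t}$ of torsion extensions of $V$ to $K(X)$ is partially ordered by $\le$.
   Context: Let $v$ be the valuation of $V$, $\Gamma_v$ its value group, $\Gamma_{\overline{v}}=\Gamma_v\otimes_{\mathbb{Z}}\mathbb{Q}$. An extension of $V$ to $K(X)$ is a valuation domain $W$ of $K(X)$ with $W\cap K=V$; it is a torsion extension if its value group $\Gamma_w$ is contained in $\Gamma_{\overline{v}}$ (i.e. $\Gamma_w/\Gamma_v$ is torsion). For torsion extensions, $w_1\le w_2$ means $w_1(f)\le w_2(f)$ in $\Gamma_{\overline{v}}$ for all $f\in K[X]$. *)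

From HB Require Import structures.
From mathcomp Require Import all_boot all_order all_algebra fraction.
Set Implicit Arguments. Unset Strict Implicit. Unset Printing Implicit Defensive.
Import Order.TTheory GRing.Theory Num.Theory.
Local Open Scope ring_scope.

Definition ratfun (K : fieldType) := {fraction {poly K}}.

Definition polyF (K : fieldType) (p : {poly K}) : ratfun K := @FracField.tofrac _ p.
Definition constF (K : fieldType) (c : K) : ratfun K := @FracField.tofrac _ c%:P.

Definition valuation_ring (F : fieldType) (W : F -> Prop) : Prop :=
  [/\ W 1,
      (forall x y, W x -> W y -> W (x - y)),
      (forall x y, W x -> W y -> W (x * y)) &
      (forall x, x != 0 -> W x \/ W x^-1)].

Definition vunit (F : fieldType) (W : F -> Prop) (x : F) : Prop :=
  [/\ x != 0, W x & W x^-1].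

Definition vmax (F : fieldType) (W : F -> Prop) (x : F) : Prop :=
  W x /\ ~ vunit W x.

Definition extension (K : fieldType) (V : K -> Prop) (W : ratfun K -> Prop) :=
  valuation_ring W /\ (forall c : K, W (constF c) <-> V c).

(* torsion extension: Gamma_w / Gamma_v is torsion, i.e. for every nonzero f,
   some n > 0 and a \in K^* with w(f^n) = v(a), i.e. f^n / a a unit of W. *)
Definition torsion_extension (K : fieldType) (V : K -> Prop)
    (W : ratfun K -> Prop) :=
  extension V W /\
  (forall f : ratfun K, f != 0 ->
     exists n : nat, (0 < n)%N /\
       exists a : K, a != 0 /\ vunit W (f ^+ n / constF a)).

(* w1 <= w2 : w1(f) <= w2(f) in Gamma_v (x) Q for all f in K[X].
   For f = 0 both sides are infinite.  For f <> 0, w1(f) = v(a1)/n and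
   w2(f) = v(a2)/n where w1(f^n) = v(a1), w2(f^n) = v(a2); and
   v(a1) <= v(a2) iff a2/a1 \in V. *)
Definition val_le (K : fieldType) (V : K -> Prop) (W1 W2 : ratfun K -> Prop) :=
  forall p : {poly K}, p != 0 ->
    exists n : nat, (0 < n)%N /\
      exists a1 a2 : K, [/\ a1 != 0, a2 != 0,
        vunit W1 (polyF p ^+ n / constF a1),
        vunit W2 (polyF p ^+ n / constF a2) &
        V (a2 / a1)].

From HB Require Import structures.
From mathcomp Require Import all_boot all_order all_algebra fraction.
From Stdlib Require Import Classical.
Set Implicit Arguments. Unset Strict Implicit. Unset Printing Implicit Defensive.
Import GRing.Theory.
Local Open Scope ring_scope.

(* A torsion witness (n, a) of f for W records n w(f) = v(a); every nonzero f
   has one, and it reduces the membership of f in W, in its units and in its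
   maximal ideal to that of a in V.  Given common witnesses (n, a1), (n, a2) of
   a polynomial p for W1 and W2, each condition of (1) is equivalent to
   a2/a1 in V: test it on the polynomial p^n/a1 (resp. p^n/a2), a unit of W1
   (resp. W2) with witness (1, a2/a1) for W2 (resp. (1, a1/a2) for W1).
   If w1 and w2 agree on K[X], a common witness of the numerator and of the
   denominator of f in K(X) for W1 is one for W2 as well, and their quotient
   is a common witness of f, so f lies in W1 iff it lies in W2. *)

Section ValuationRing.
Variables (F : fieldType) (W : F -> Prop).
Hypothesis hW : valuation_ring W.

Lemma vring1 : W 1. Proof. by case: hW. Qed.

Lemma vringB x y : W x -> W y -> W (x - y). Proof. by case: hW => _ h *; apply: h. Qed.

Lemma vringM x y : W x -> W y -> W (x * y). Proof. by case: hW => _ _ h *; apply: h. Qed.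

Lemma vring_inv x : x != 0 -> W x \/ W x^-1. Proof. by case: hW => _ _ _; apply. Qed.

Lemma vring0 : W 0. Proof. by rewrite -(subrr 1); apply: vringB vring1 vring1. Qed.

Lemma vringX x n : W x -> W (x ^+ n).
Proof. by move=> Wx; elim: n => [|n IHn]; rewrite ?expr0 ?exprS; [apply: vring1 | apply: vringM]. Qed.

Lemma vringXn_gt0 x n : (0 < n)%N -> W (x ^+ n) <-> W x.
Proof.
case: n => // m _; split; last exact: vringX.
move=> Wxn; have [->|x0] := eqVneq x 0; first exact: vring0.
have [//|Wxi] := vring_inv x0.
have -> : x = x ^+ m.+1 * x^-1 ^+ m by rewrite exprVn exprS mulfK // expf_neq0.
by apply: vringM Wxn (vringX _ Wxi).
Qed.

Lemma vunitV x : vunit W x -> vunit W x^-1.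
Proof. by case=> x0 Wx Wxi; split; rewrite ?invr_eq0 ?invrK. Qed.

Lemma vunitM x y : vunit W x -> vunit W y -> vunit W (x * y).
Proof.
case=> x0 Wx Wxi [y0 Wy Wyi]; split; rewrite ?mulf_neq0 ?invfM //.
  exact: vringM.
exact: vringM.
Qed.

Lemma vunitXn_gt0 x n : (0 < n)%N -> vunit W (x ^+ n) <-> vunit W x.
Proof.
move=> n0; split.
  case=> xn0 Wxn Wxni; split.
  - by move: xn0; rewrite expf_eq0 n0.
  - exact/(vringXn_gt0 _ n0).
  - by apply/(vringXn_gt0 _ n0); rewrite exprVn.
case=> x0 Wx Wxi; split; rewrite ?expf_neq0 // -?exprVn; exact: vringX.
Qed.

Lemma vring_mulr_unit x u : vunit W u -> W (x * u) <-> W x.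
Proof.
case=> u0 Wu Wui; split => [Wxu|Wx]; last exact: vringM.
by rewrite -(mulfK u0 x); apply: vringM.
Qed.

Lemma vunit_mulr_unit x u : vunit W u -> vunit W (x * u) <-> vunit W x.
Proof.
move=> Uu; split => [Uxu|Ux]; last exact: vunitM.
have u0 : u != 0 by case: Uu.
by rewrite -(mulfK u0 x); apply: vunitM (vunitV Uu).
Qed.

Lemma vmaxM x y : vmax W x -> W y -> vmax W (y * x).
Proof.
case=> Wx nUx Wy; split; first exact: vringM.
case=> yx0 _ Wyxi; apply: nUx.
have [y0 x0] : y != 0 /\ x != 0 by apply/andP; rewrite -negb_or -mulf_eq0.
split=> //; have -> : x^-1 = y * (y * x)^-1 by rewrite invfM mulrA divff ?mul1r.
exact: vringM.
Qed.

Lemma vring_inv_or_vmax x : x != 0 -> W x^-1 \/ vmax W x.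
Proof.
move=> x0; have [Wxi|nWxi] := classic (W x^-1); first by left.
right; split; last by case.
by have [] := vring_inv x0.
Qed.

End ValuationRing.

Lemma vunitE (F : fieldType) (W : F -> Prop) x : vunit W x <-> W x /\ ~ vmax W x.
Proof.
split=> [Ux|[Wx nMx]]; first by split; [case: Ux | case].
by apply: NNPP => nUx; apply: nMx.
Qed.

Lemma vunit_ext (F : fieldType) (W W' : F -> Prop) :
  (forall x, W x <-> W' x) -> forall x, vunit W x <-> vunit W' x.
Proof. by move=> h x; split=> -[x0 Wx Wxi]; split; rewrite // ?h // -h. Qed.

Lemma vmax_ext (F : fieldType) (W W' : F -> Prop) :
  (forall x, W x <-> W' x) -> forall x, vmax W x <-> vmax W' x.
Proof. by move=> h x; rewrite /vmax (vunit_ext h) h. Qed.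

HB.instance Definition _ (K : fieldType) :=
  GRing.RMorphism.copy (@polyF K) (@FracField.tofrac _).
HB.instance Definition _ (K : fieldType) :=
  GRing.RMorphism.copy (@constF K) (@FracField.tofrac _ \o polyC).

Lemma polyF_eq0 (K : fieldType) (p : {poly K}) : (polyF p == 0) = (p == 0).
Proof. exact: tofrac_eq0. Qed.

Lemma polyF_exprn_divC (K : fieldType) (p : {poly K}) n a :
  polyF (p ^+ n * (a^-1)%:P) = polyF p ^+ n / constF a.
Proof. by rewrite rmorphM rmorphXn /= -fmorphV. Qed.

Lemma ratfun_fracE (K : fieldType) (f : ratfun K) :
  exists p q : {poly K}, q != 0 /\ f = polyF p / polyF q.
Proof.
elim/quotW: f => r; exists \n_r, \d_r; have d0 := denom_ratioP r.
split=> //; apply: (canRL (mulfK _)); first by rewrite polyF_eq0.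
change (FracField.mul (\pi%qT r) (FracField.tofrac \d_r) = FracField.tofrac \n_r).
rewrite /FracField.tofrac; unlock; rewrite -FracField.pi_mul.
apply/eqP; rewrite FracField.equivf_def /FracField.mulf.
by rewrite !numden_Ratio ?mulf_neq0 ?oner_eq0 // !mulr1 mulrC.
Qed.

Lemma expr_div_n_div (F : fieldType) (f g a b : F) n :
  (f / g) ^+ n / (a / b) = f ^+ n / a / (g ^+ n / b).
Proof. by rewrite expr_div_n !invfM !invrK mulrACA mulrC. Qed.

Definition torsion_witness (K : fieldType) (W : ratfun K -> Prop)
    (f : ratfun K) (n : nat) (a : K) :=
  [/\ (0 < n)%N, a != 0 & vunit W (f ^+ n / constF a)].

Section WitnessArithmetic.
Variables (K : fieldType) (W : ratfun K -> Prop).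
Hypothesis hW : valuation_ring W.

Lemma witnessXn f n a k : (0 < k)%N ->
  torsion_witness W f n a -> torsion_witness W f (n * k) (a ^+ k).
Proof.
move=> k0 [n0 a0 U]; split; rewrite ?muln_gt0 ?n0 ?expf_neq0 //.
by rewrite exprM rmorphXn -expr_div_n; apply/(vunitXn_gt0 hW _ k0).
Qed.

Lemma witness_div f g n a b : torsion_witness W f n a ->
  torsion_witness W g n b -> torsion_witness W (f / g) n (a / b).
Proof.
move=> [n0 a0 Uf] [_ b0 Ug]; split; rewrite ?mulf_neq0 ?invr_eq0 //.
by rewrite fmorph_div expr_div_n_div; apply/vunitM/vunitV.
Qed.

End WitnessArithmetic.

Lemma witness_normalize (K : fieldType) (W : ratfun K -> Prop) f n a b :
  b != 0 -> torsion_witness W f n a ->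
  torsion_witness W (f ^+ n / constF b) 1 (a / b).
Proof.
move=> b0 [_ a0 U]; split; rewrite ?mulf_neq0 ?invr_eq0 //.
have B0 : constF b != 0 by rewrite fmorph_eq0.
by rewrite fmorph_div expr1 invf_div mulrA divfK.
Qed.

Section ExtensionWitness.
Variables (K : fieldType) (V : K -> Prop) (W : ratfun K -> Prop).
Hypothesis hW : extension V W.

Lemma vring_constF a : W (constF a) <-> V a.
Proof. exact: (proj2 hW). Qed.

Lemma vunit_constF a : vunit W (constF a) <-> vunit V a.
Proof.
by rewrite /vunit fmorph_eq0 -fmorphV; split=> -[a0 Wa Wai]; split=> //; apply/vring_constF.
Qed.

Section Witness.
Variables (f : ratfun K) (n : nat) (a : K).
Hypothesis wf : torsion_witness W f n a.

Let fn_split : f ^+ n = constF a * (f ^+ n / constF a).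
Proof. by case: wf => _ a0 _; rewrite mulrC divfK // fmorph_eq0. Qed.

Lemma witness_vring : W f <-> V a.
Proof.
case: wf => n0 _ U.
by rewrite -(vringXn_gt0 (proj1 hW) _ n0) fn_split (vring_mulr_unit (proj1 hW)) // vring_constF.
Qed.

Lemma witness_vunit : vunit W f <-> vunit V a.
Proof.
case: wf => n0 _ U.
by rewrite -(vunitXn_gt0 (proj1 hW) _ n0) fn_split (vunit_mulr_unit (proj1 hW)) // vunit_constF.
Qed.

Lemma witness_vmax : vmax W f <-> vmax V a.
Proof. by rewrite /vmax witness_vring witness_vunit. Qed.

End Witness.
End ExtensionWitness.

Lemma torsion_witness_common (K : fieldType) (V : K -> Prop)
    (W W' : ratfun K -> Prop) f g :
  torsion_extension V W -> torsion_extension V W' -> f != 0 -> g != 0 ->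
  exists n a b, torsion_witness W f n a /\ torsion_witness W' g n b.
Proof.
move=> [hW tW] [hW' tW'] f0 g0.
have [n [n0 [a [a0 Uf]]]] := tW f f0.
have [m [m0 [b [b0 Ug]]]] := tW' g g0.
exists (n * m)%N, (a ^+ m), (b ^+ n); split; first exact: (witnessXn (proj1 hW)).
by rewrite mulnC; apply: (witnessXn (proj1 hW')).
Qed.

Lemma val_leP (K : fieldType) (V : K -> Prop) (W1 W2 : ratfun K -> Prop) :
  val_le V W1 W2 <-> forall p : {poly K}, p != 0 ->
    exists n a1 a2, [/\ torsion_witness W1 (polyF p) n a1,
                        torsion_witness W2 (polyF p) n a2 & V (a2 / a1)].
Proof.
split=> h p p0.
  by have [n [n0 [a1 [a2 [a10 a20 U1 U2 Va]]]]] := h p p0; exists n, a1, a2.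
have [n [a1 [a2 [[n0 a10 U1] [_ a20 U2] Va]]]] := h p p0.
by exists n; split=> //; exists a1, a2.
Qed.

Section Comparison.
Variables (K : fieldType) (V : K -> Prop) (W1 W2 : ratfun K -> Prop).
Hypotheses (hV : valuation_ring V)
  (t1 : torsion_extension V W1) (t2 : torsion_extension V W2).

Let e1 : extension V W1 := proj1 t1.
Let e2 : extension V W2 := proj1 t2.

Lemma val_le_vring : val_le V W1 W2 -> forall p, W1 (polyF p) -> W2 (polyF p).
Proof.
move=> /val_leP hle p; have [->|p0] := eqVneq p 0.
  by rewrite rmorph0 => _; apply: vring0 (proj1 e2).
have [n [a1 [a2 [w1 w2 Va]]]] := hle p p0.
have a10 : a1 != 0 by case: w1.
rewrite (witness_vring e1 w1) (witness_vring e2 w2) -(divfK a10 a2) => Va1.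
exact: vringM.
Qed.

Lemma val_le_vmax : val_le V W1 W2 -> forall p, vmax W1 (polyF p) -> vmax W2 (polyF p).
Proof.
move=> /val_leP hle p; have [->|p0] := eqVneq p 0.
  by rewrite rmorph0 => _; split; [apply: vring0 (proj1 e2) | case; rewrite eqxx].
have [n [a1 [a2 [w1 w2 Va]]]] := hle p p0.
have a10 : a1 != 0 by case: w1.
rewrite (witness_vmax e1 w1) (witness_vmax e2 w2) -(divfK a10 a2) => Ma1.
exact: vmaxM.
Qed.

Lemma vring_val_le : (forall p, W1 (polyF p) -> W2 (polyF p)) -> val_le V W1 W2.
Proof.
move=> hsub; apply/val_leP => p p0; have P0 : polyF p != 0 by rewrite polyF_eq0.
have [n [a1 [a2 [w1 w2]]]] := torsion_witness_common t1 t2 P0 P0.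
exists n, a1, a2; split=> //.
have a10 : a1 != 0 by case: w1.
have := hsub (p ^+ n * (a1^-1)%:P); rewrite polyF_exprn_divC.
rewrite (witness_vring e2 (witness_normalize a10 w2)); apply.
by case: w1 => _ _ [].
Qed.

Lemma vmax_val_le : (forall p, vmax W1 (polyF p) -> vmax W2 (polyF p)) -> val_le V W1 W2.
Proof.
move=> hsub; apply/val_leP => p p0; have P0 : polyF p != 0 by rewrite polyF_eq0.
have [n [a1 [a2 [w1 w2]]]] := torsion_witness_common t1 t2 P0 P0.
exists n, a1, a2; split=> //.
have [a10 a20] : a1 != 0 /\ a2 != 0 by case: w1; case: w2.
have a12 : a1 / a2 != 0 by rewrite mulf_neq0 ?invr_eq0.
have [|Ma] := vring_inv_or_vmax hV a12; first by rewrite invf_div.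
have := hsub (p ^+ n * (a2^-1)%:P); rewrite !polyF_exprn_divC.
rewrite (witness_vmax e1 (witness_normalize a20 w1)) => /(_ Ma) [_ nU2].
by case: nU2; case: w2.
Qed.

End Comparison.

Section Antisymmetry.
Variables (K : fieldType) (V : K -> Prop) (W1 W2 : ratfun K -> Prop).
Hypotheses (hV : valuation_ring V)
  (t1 : torsion_extension V W1) (t2 : torsion_extension V W2).
Hypotheses (h12 : val_le V W1 W2) (h21 : val_le V W2 W1).

Let e1 : extension V W1 := proj1 t1.
Let e2 : extension V W2 := proj1 t2.

Lemma val_le_anti_vunit p : vunit W1 (polyF p) -> vunit W2 (polyF p).
Proof.
move=> /vunitE [W1p nM1p].
apply/vunitE; split; first exact: (val_le_vring hV t1 t2 h12 W1p).
by move/(val_le_vmax hV t2 t1 h21).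
Qed.

Lemma val_le_anti_witness p n a :
  torsion_witness W1 (polyF p) n a -> torsion_witness W2 (polyF p) n a.
Proof.
case=> n0 a0 U; split=> //.
by rewrite -polyF_exprn_divC; apply: val_le_anti_vunit; rewrite polyF_exprn_divC.
Qed.

Lemma val_le_anti f : W1 f <-> W2 f.
Proof.
have [p [q [q0 ->]]] := ratfun_fracE f.
have [->|p0] := eqVneq (polyF p) 0.
  by rewrite mul0r; split=> _; apply: vring0; [exact: (proj1 e2) | exact: (proj1 e1)].
have Q0 : polyF q != 0 by rewrite polyF_eq0.
have [n [a [b [wp wq]]]] := torsion_witness_common t1 t1 p0 Q0.
have w1 := witness_div (proj1 e1) wp wq.
have w2 := witness_div (proj1 e2) (val_le_anti_witness wp) (val_le_anti_witness wq).
by rewrite (witness_vring e1 w1) (witness_vring e2 w2).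
Qed.

End Antisymmetry.

Theorem mainTheorem3 (K : fieldType) (V : K -> Prop)
    (W1 W2 : ratfun K -> Prop) :
  valuation_ring V ->
  torsion_extension V W1 -> torsion_extension V W2 ->
  (* (1) *)
  ((val_le V W1 W2 <-> (forall p : {poly K}, W1 (polyF p) -> W2 (polyF p))) /\
   (val_le V W1 W2 <->
      (forall p : {poly K}, vmax W1 (polyF p) -> vmax W2 (polyF p)))) /\
  (* (2) *)
  (((forall f, W1 f <-> W2 f) <->
      (forall p : {poly K}, W1 (polyF p) <-> W2 (polyF p))) /\
   ((forall f, W1 f <-> W2 f) <->
      (forall p : {poly K}, vmax W1 (polyF p) <-> vmax W2 (polyF p)))) /\
  (* (3) <= is a partial order on the torsion extensions of V *)
  ((forall W, torsion_extension V W -> val_le V W W) /\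
   (forall W W' W'', torsion_extension V W -> torsion_extension V W' ->
      torsion_extension V W'' ->
      val_le V W W' -> val_le V W' W'' -> val_le V W W'') /\
   (forall W W', torsion_extension V W -> torsion_extension V W' ->
      val_le V W W' -> val_le V W' W -> forall f, W f <-> W' f)).
Proof.
move=> hV t1 t2; split; [split|split; [split|split; [|split]]].
- by split; [apply: val_le_vring | apply: vring_val_le].
- by split; [apply: val_le_vmax | apply: vmax_val_le].
- split=> [h p|h]; first exact: h.
  by apply: (val_le_anti hV t1 t2); apply: vring_val_le => // p /h.
- split=> [h p|h]; first exact: vmax_ext.
  by apply: (val_le_anti hV t1 t2); apply: vmax_val_le => // p /h.
- by move=> W t; apply: vring_val_le.
- move=> W W' W'' t t' t'' h h'; apply: vring_val_le => // p Wp.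
  exact: (val_le_vring hV t' t'' h' (val_le_vring hV t t' h Wp)).
- by move=> W W' t t'; apply: val_le_anti.
Qed.
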